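(* For any state $\rho$ of $A$ and any state $\eta$ of $R$, $$H_{\mathcal{G}(\eta)}(\rho)=H_\eta(\mathcal{G}(\rho))=H_{\mathcal{G}(\eta)}(\mathcal{G}(\rho))=-\log\|\mathcal{G}(\eta)\|_\infty .$$
   Context: $G$ is a compact group with normalized Haar measure $dg$; finite-dimensional systems $A,R$ carry continuous unitary representations $U_A,U_R$. On a single system $\mathcal{G}(M)=\int dg\,U(g)MU(g)^\dagger$; on $RA$, $\mathcal{G}(M)=\int dg\,(U_R(g)\otimes U_A(g))M(U_R(g)\otimes U_A(g))^\dagger$. $H_{\min}(R|A)_\Omega=-\log_2\inf_{X\ge0}\{\mathrm{tr}[X]:\mathbb{1}_R\otimes X\ge\Omega_{RA}\}$, and $H_\eta(\tau):=H_{\min}(R|A)_{\mathcal{G}(\eta\otimes\tau)}$. $\|\cdot\|_\infty$ is the operator norm; logarithms base 2. *)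

From HB Require Import structures.
From mathcomp Require Import all_boot all_order all_algebra.
From mathcomp Require Import all_classical all_reals all_analysis.
From mathcomp Require Import complex mxtens.
Set Implicit Arguments. Unset Strict Implicit. Unset Printing Implicit Defensive.
Import Order.TTheory GRing.Theory Num.Theory.
Import numFieldNormedType.Exports.
Local Open Scope ring_scope.
Local Open Scope classical_set_scope.
Local Open Scope sesquilinear_scope.
Local Open Scope complex_scope.

Section QDefs.
Variable R : realType.
Local Notation C := R[i].

(* Loewner order: M >= 0 iff v^dagger M v >= 0 for all v (over C, 0 <= z
   means z is real and nonnegative; this also forces M to be Hermitian). *)
Definition psd n (M : 'M[C]_n) : Prop :=
  forall v : 'cV[C]_n, 0 <= (v ^t* *m M *m v) 0 0.

Definition is_state n (rho : 'M[C]_n) : Prop := psd rho /\ \tr rho = 1.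

Definition vnorm n (v : 'cV[C]_n) : R :=
  Num.sqrt (\sum_i complex.Re (`|v i 0| ^+ 2)).

Definition opnorm n (M : 'M[C]_n) : R :=
  sup [set vnorm (M *m v) | v in [set v : 'cV[C]_n | vnorm v = 1]].

Definition log2 (x : R) : R := ln x / ln 2.

(* conditional min-entropy H_min(R|A)_Omega, Omega on R (x) A (R first) *)
Definition Hmin nR nA (Omega : 'M[C]_(nR * nA)) : R :=
  - log2 (inf [set complex.Re (\tr X) |
      X in [set X : 'M[C]_nA | psd X /\ psd ((1%:M : 'M[C]_nR) *t X - Omega)]]).
End QDefs.

Section GroupDefs.
Variables (R : realType) (G : ptopologicalType).
Local Notation C := R[i].

Definition borel_G : measurableType _ := g_sigma_algebraType (@open G).

Record compact_group (mul : G -> G -> G) (inv : G -> G) (one : G) : Prop := {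
  cg_mulA : forall x y z, mul x (mul y z) = mul (mul x y) z;
  cg_mul1 : forall x, mul one x = x;
  cg_mulV : forall x, mul (inv x) x = one;
  cg_mul_cont : continuous (fun p : G * G => mul p.1 p.2);
  cg_inv_cont : continuous inv;
  cg_hausdorff : hausdorff_space G;
  cg_compact : compact [set: G] }.

Definition haar (mul : G -> G -> G) (mu : probability borel_G R) : Prop :=
  forall (g : G) (A : set borel_G), measurable A ->
    mu [set mul g x | x in A] = mu A.

Definition cont_unitary_rep n (mul : G -> G -> G) (one : G)
    (U : G -> 'M[C]_n) : Prop :=
  [/\ forall g h, U (mul g h) = U g *m U h,
      U one = 1%:M,
      forall g, U g \is unitarymx &
      forall i j, continuous (fun g => complex.Re (U g i j)) /\
                  continuous (fun g => complex.Im (U g i j))].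

Definition twirl n (mu : probability borel_G R) (U : G -> 'M[C]_n)
    (M : 'M[C]_n) : 'M[C]_n :=
  \matrix_(i, j)
    ((Rintegral mu setT (fun g : borel_G => complex.Re ((U g *m M *m (U g) ^t*) i j)))%:C
     + 'i * (Rintegral mu setT
               (fun g : borel_G => complex.Im ((U g *m M *m (U g) ^t*) i j)))%:C).

Definition twirlRA nR nA (mu : probability borel_G R) (UR : G -> 'M[C]_nR)
    (UA : G -> 'M[C]_nA) : 'M[C]_(nR * nA) -> 'M[C]_(nR * nA) :=
  twirl mu (fun g => UR g *t UA g).

Definition Heta nR nA (mu : probability borel_G R) (UR : G -> 'M[C]_nR)
    (UA : G -> 'M[C]_nA) (eta : 'M[C]_nR) (tau : 'M[C]_nA) : R :=
  Hmin (twirlRA mu UR UA (eta *t tau)).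
End GroupDefs.

From HB Require Import structures.
From mathcomp Require Import all_boot all_order all_algebra.
From mathcomp Require Import all_classical all_reals all_analysis.
From mathcomp Require Import complex mxtens measurable_realfun ring.
Import Order.TTheory GRing.Theory Num.Theory.
Import numFieldNormedType.Exports.
Set Implicit Arguments. Unset Strict Implicit. Unset Printing Implicit Defensive.
(* [complex_scope] is opened first so that [x^*] denotes [Num.conj] (the
   conjugation the matrix library uses), while [%:C] stays available. *)
Local Open Scope complex_scope.
Local Open Scope ring_scope.
Local Open Scope classical_set_scope.
Local Open Scope sesquilinear_scope.

(** Left invariance of the Haar measure makes every twirl [G(M)] invariant
under conjugation by the representation, so [G(sigma (x) tau) = sigma (x) G(tau)]
for invariant [sigma] (and symmetrically); hence all three entropies are the
conditional min-entropy of [G(eta) (x) G(rho)].  For [sigma >= 0] with largest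
eigenvalue [l] and a state [tau], [X = l tau] is feasible in the definition of
[H_min], while compressing [1 (x) X >= sigma (x) tau] along a top eigenvector
of [sigma] gives [X >= l tau], so [tr X >= l]; and [l = ||sigma||_oo]. *)

Section ComplexParts.
Variable R : rcfType.
Implicit Types x y : R[i].

Lemma complex_ext x y :
  complex.Re x = complex.Re y -> complex.Im x = complex.Im y -> x = y.
Proof. by case: x => ? ?; case: y => ? ? /= -> ->. Qed.

Lemma ReD x y : complex.Re (x + y) = complex.Re x + complex.Re y.
Proof. exact: raddfD. Qed.

Lemma ImD x y : complex.Im (x + y) = complex.Im x + complex.Im y.
Proof. exact: raddfD. Qed.

Lemma Re_mul x y :
  complex.Re (x * y) = complex.Re x * complex.Re y - complex.Im x * complex.Im y.
Proof. by case: x => ? ?; case: y => ? ?. Qed.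

Lemma Im_mul x y :
  complex.Im (x * y) = complex.Re x * complex.Im y + complex.Im x * complex.Re y.
Proof. by case: x => ? ?; case: y => ? ?. Qed.

Lemma ReJ x : complex.Re x^* = complex.Re x.
Proof. by case: x. Qed.

Lemma ImJ x : complex.Im x^* = - complex.Im x.
Proof. by case: x. Qed.

Lemma Re_realM (a : R) x : complex.Re (a%:C * x) = a * complex.Re x.
Proof. by rewrite Re_mul /= mul0r subr0. Qed.

Lemma ge0_complex_real x : 0 <= x -> x = (complex.Re x)%:C.
Proof. by case: x => a b; rewrite lecE /= => /andP[/eqP -> _]. Qed.

Lemma le_complex_Re x y : x <= y -> complex.Re x <= complex.Re y.
Proof. by rewrite lecE => /andP[]. Qed.
End ComplexParts.

Section ComplexContinuity.
Variables (R : realType) (T : topologicalType).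

(* [R[i]] carries no topology here: a complex function is continuous when its
   real and imaginary parts are. *)
Definition ccontinuous (F : T -> R[i]) :=
  continuous (fun t => complex.Re (F t)) /\ continuous (fun t => complex.Im (F t)).

Lemma ccontinuous_cst c : ccontinuous (fun _ => c).
Proof. by split=> t; exact: cst_continuous. Qed.

Lemma ccontinuousD F H :
  ccontinuous F -> ccontinuous H -> ccontinuous (fun t => F t + H t).
Proof.
move=> [F1 F2] [H1 H2]; split.
  by under eq_fun do rewrite ReD; move=> t; exact: continuousD (F1 t) (H1 t).
by under eq_fun do rewrite ImD; move=> t; exact: continuousD (F2 t) (H2 t).
Qed.

Lemma ccontinuousM F H :
  ccontinuous F -> ccontinuous H -> ccontinuous (fun t => F t * H t).
Proof.
move=> [F1 F2] [H1 H2]; split.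
  under eq_fun do rewrite Re_mul; move=> t.
  exact: continuousB (continuousM (F1 t) (H1 t)) (continuousM (F2 t) (H2 t)).
under eq_fun do rewrite Im_mul; move=> t.
exact: continuousD (continuousM (F1 t) (H2 t)) (continuousM (F2 t) (H1 t)).
Qed.

Lemma ccontinuous_conj F : ccontinuous F -> ccontinuous (fun t => (F t)^*).
Proof.
move=> [F1 F2]; split; first by under eq_fun do rewrite ReJ.
by under eq_fun do rewrite ImJ; move=> t; exact: continuousN (F2 t).
Qed.

Lemma ccontinuous_sum (I : Type) (r : seq I) (P : pred I) (F : I -> T -> R[i]) :
  (forall i, ccontinuous (F i)) ->
  ccontinuous (fun t => \sum_(i <- r | P i) F i t).
Proof.
move=> cF; elim: r => [|a r IH].
  by under eq_fun do rewrite big_nil; exact: ccontinuous_cst.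
under eq_fun do rewrite big_cons.
by case: (P a) => //; exact: ccontinuousD.
Qed.

Definition mxcontinuous m n (F : T -> 'M[R[i]]_(m, n)) :=
  forall i j, ccontinuous (fun t => F t i j).

Lemma mxcontinuous_cst m n (M : 'M[R[i]]_(m, n)) : mxcontinuous (fun _ => M).
Proof. by move=> i j; exact: ccontinuous_cst. Qed.

Lemma mxcontinuous_mul m n p (F : T -> 'M[R[i]]_(m, n)) (H : T -> 'M[R[i]]_(n, p)) :
  mxcontinuous F -> mxcontinuous H -> mxcontinuous (fun t => F t *m H t).
Proof.
move=> cF cH i j; under eq_fun do rewrite mxE.
by apply: ccontinuous_sum => k; exact: ccontinuousM.
Qed.

Lemma mxcontinuous_adj m n (F : T -> 'M[R[i]]_(m, n)) :
  mxcontinuous F -> mxcontinuous (fun t => (F t)^t*).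
Proof. by move=> cF i j; under eq_fun do rewrite !mxE; exact: ccontinuous_conj. Qed.
End ComplexContinuity.

Section Integrals.
Variables (R : realType) (G : ptopologicalType) (mu : probability (borel_G G) R).
Hypothesis compactG : compact [set: G].

Lemma continuous_measurable_fun (f : G -> R) :
  continuous f -> measurable_fun [set: borel_G G] f.
Proof.
move=> /continuousP cf.
apply: (measurability _ (measurable_realfun.RGenOpens.measurableE R)).
move=> _ [_ [a [b ->]] <-]; rewrite setTI; apply: sub_sigma_algebra.
exact/cf/interval_open.
Qed.

Lemma continuous_integrable (f : G -> R) :
  continuous f -> mu.-integrable [set: borel_G G] (EFin \o f).
Proof.
move=> cf; apply: measurable_bounded_integrable => //.
- exact: le_lt_trans (probability_le1 mu measurableT) (ltry 1).
- exact: continuous_measurable_fun.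
have := compact_bounded (continuous_compact (continuous_subspaceT cf) compactG).
rewrite /= /bounded_near; apply: filterS => M HM x _.
by apply: HM; exists x.
Qed.

Definition cintegral (F : G -> R[i]) : R[i] :=
  (Rintegral mu setT (fun g : borel_G G => complex.Re (F g)))%:C
  + 'i * (Rintegral mu setT (fun g : borel_G G => complex.Im (F g)))%:C.

Lemma Re_cintegral F :
  complex.Re (cintegral F) = Rintegral mu setT (fun g => complex.Re (F g)).
Proof. by rewrite ReD Re_mul /=; ring. Qed.

Lemma Im_cintegral F :
  complex.Im (cintegral F) = Rintegral mu setT (fun g => complex.Im (F g)).
Proof. by rewrite ImD Im_mul /=; ring. Qed.

Lemma cintegral_cst c : cintegral (fun _ => c) = c.
Proof.
have mu1 : fine (mu setT) = 1 by rewrite probability_setT.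
apply: complex_ext;
  by rewrite ?Re_cintegral ?Im_cintegral Rintegral_cst // mu1 mulr1.
Qed.

Lemma cintegralD F H : ccontinuous F -> ccontinuous H ->
  cintegral (fun g => F g + H g) = cintegral F + cintegral H.
Proof.
move=> [F1 F2] [H1 H2]; apply: complex_ext.
  rewrite Re_cintegral ReD !Re_cintegral; under eq_Rintegral do rewrite ReD.
  by apply: RintegralD => //; exact: continuous_integrable.
rewrite Im_cintegral ImD !Im_cintegral; under eq_Rintegral do rewrite ImD.
by apply: RintegralD => //; exact: continuous_integrable.
Qed.

Lemma cintegralZl c F : ccontinuous F ->
  cintegral (fun g => c * F g) = c * cintegral F.
Proof.
move=> [F1 F2].
have intF1 := continuous_integrable F1; have intF2 := continuous_integrable F2.
have intZ (a : R) f :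
    continuous f -> mu.-integrable setT (EFin \o (fun g => a * f g)).
  move=> cf; apply: continuous_integrable => t.
  by apply: (@continuousM _ _ (fun=> a) f t); [exact: cst_continuous | exact: cf].
apply: complex_ext.
  rewrite Re_cintegral Re_mul Re_cintegral Im_cintegral.
  under eq_Rintegral do rewrite Re_mul.
  by rewrite RintegralB ?intZ // !RintegralZl.
rewrite Im_cintegral Im_mul Re_cintegral Im_cintegral.
under eq_Rintegral do rewrite Im_mul.
by rewrite RintegralD ?intZ // !RintegralZl.
Qed.

Lemma cintegral_sum (I : Type) (r : seq I) (P : pred I) (F : I -> G -> R[i]) :
  (forall i, ccontinuous (F i)) ->
  cintegral (fun g => \sum_(i <- r | P i) F i g)
  = \sum_(i <- r | P i) cintegral (F i).
Proof.
move=> cF; elim: r => [|a r IH].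
  by under eq_fun do rewrite big_nil; rewrite big_nil cintegral_cst.
under eq_fun do rewrite big_cons; rewrite big_cons.
by case: (P a) => //; rewrite cintegralD ?IH //; exact: ccontinuous_sum.
Qed.

Lemma cintegral_ge0 F : (forall g, 0 <= F g) -> 0 <= cintegral F.
Proof.
move=> F_ge0.
have -> : cintegral F = (Rintegral mu setT (fun g => complex.Re (F g)))%:C.
  apply: complex_ext; rewrite ?Re_cintegral ?Im_cintegral //=.
  under eq_Rintegral do rewrite (ge0_complex_real (F_ge0 _)) /=.
  by rewrite Rintegral_cst // mul0r.
rewrite lecR; apply: Rintegral_ge0 => g _; exact: le_complex_Re (F_ge0 g).
Qed.

Definition mxintegral m n (F : G -> 'M[R[i]]_(m, n)) : 'M[R[i]]_(m, n) :=
  \matrix_(i, j) cintegral (fun g => F g i j).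

Lemma mxintegral_cst m n (M : 'M[R[i]]_(m, n)) : mxintegral (fun _ => M) = M.
Proof. by apply/matrixP => i j; rewrite !mxE cintegral_cst. Qed.

Lemma mxintegral_mulmxl m n p (A : 'M[R[i]]_(m, n)) (F : G -> 'M[R[i]]_(n, p)) :
  mxcontinuous F -> mxintegral (fun g => A *m F g) = A *m mxintegral F.
Proof.
move=> cF; apply/matrixP => i j; rewrite !mxE.
under eq_fun do rewrite mxE.
rewrite cintegral_sum => [|k]; last first.
  exact: ccontinuousM (ccontinuous_cst _ _) (cF k j).
by apply: eq_bigr => k _; rewrite mxE cintegralZl.
Qed.

Lemma mxintegral_mulmxr m n p (F : G -> 'M[R[i]]_(m, n)) (B : 'M[R[i]]_(n, p)) :
  mxcontinuous F -> mxintegral (fun g => F g *m B) = mxintegral F *m B.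
Proof.
move=> cF; apply/matrixP => i j; rewrite !mxE.
under eq_fun do rewrite mxE.
rewrite cintegral_sum => [|k]; last first.
  exact: ccontinuousM (cF i k) (ccontinuous_cst _ _).
apply: eq_bigr => k _; rewrite mxE mulrC -cintegralZl //.
by under eq_fun do rewrite mulrC.
Qed.

Lemma mxintegral_tensl m n p q (M : 'M[R[i]]_(m, n)) (F : G -> 'M[R[i]]_(p, q)) :
  mxcontinuous F -> mxintegral (fun g => M *t F g) = M *t mxintegral F.
Proof.
move=> cF; apply/matrixP => i j; rewrite !mxE -cintegralZl //.
by under eq_fun do rewrite mxE.
Qed.

Lemma mxintegral_tensr m n p q (F : G -> 'M[R[i]]_(m, n)) (N : 'M[R[i]]_(p, q)) :
  mxcontinuous F -> mxintegral (fun g => F g *t N) = mxintegral F *t N.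
Proof.
move=> cF; apply/matrixP => i j; rewrite !mxE mulrC -cintegralZl //.
by under eq_fun do rewrite mxE mulrC.
Qed.
End Integrals.

Section HaarInvariance.
Variables (R : realType) (G : ptopologicalType).
Variables (mul : G -> G -> G) (inv : G -> G) (one : G).
Variable mu : probability (borel_G G) R.
Hypotheses (CG : compact_group mul inv one) (haar_mu : haar mul mu).

Lemma cg_mulgV g : mul g (inv g) = one.
Proof.
have [mulA mul1 mulV _ _ _ _] := CG.
by rewrite -[mul g _]mul1 -(mulV (inv g)) -mulA (mulA (inv g)) mulV mul1.
Qed.

Lemma continuous_translate g : continuous (mul g).
Proof.
move=> x; have -> : mul g = (fun p : G * G => mul p.1 p.2) \o pair g by [].
apply: continuous_comp; last exact: (@cg_mul_cont _ _ _ _ CG (g, x)).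
by apply: cvg_pair; [exact: cvg_cst | exact: cvg_id].
Qed.

Lemma measurable_translate g :
  measurable_fun [set: borel_G G] (mul g : borel_G G -> borel_G G).
Proof.
apply: (@measurability _ _ (borel_G G) (borel_G G) setT (mul g) (@open G)) => //.
move=> _ [A oA <-]; rewrite setTI; apply: sub_sigma_algebra.
exact: (continuousP (mul g)).1 (@continuous_translate g) A oA.
Qed.

Lemma preimage_translate g (A : set G) :
  mul g @^-1` A = [set mul (inv g) x | x in A].
Proof.
have [mulA mul1 mulV _ _ _ _] := CG.
apply/seteqP; split => x /=.
  by move=> Agx; exists (mul g x) => //; rewrite mulA mulV mul1.
by move=> [y Ay <-]; rewrite mulA cg_mulgV mul1.
Qed.

Lemma Rintegral_translate g (f : G -> R) : continuous f ->
  Rintegral mu setT (fun h => f (mul g h)) = Rintegral mu setT f.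
Proof.
move=> cf; rewrite /Rintegral; congr fine.
have mf : measurable_fun [set: borel_G G] (EFin \o f).
  by apply/measurable_EFinP; exact: continuous_measurable_fun.
have cfg : continuous (f \o mul g).
  by move=> x; apply: continuous_comp; [exact: continuous_translate | exact: cf].
have intfg : mu.-integrable (mul g @^-1` [set: borel_G G])
    ((EFin \o f : borel_G G -> \bar R) \o mul g).
  exact (continuous_integrable mu (cg_compact CG) cfg).
rewrite -(integral_pushforward (measurable_translate g) mf intfg measurableT).
apply: eq_measure_integral; first exact: measurable_translate.
by move=> mT A mA _ /=; rewrite /pushforward preimage_translate haar_mu.
Qed.

Lemma cintegral_translate g F : ccontinuous F ->
  cintegral mu (fun h => F (mul g h)) = cintegral mu F.
Proof.
move=> [F1 F2]; apply: complex_ext; rewrite !(Re_cintegral, Im_cintegral).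
  exact: Rintegral_translate F1.
exact: Rintegral_translate F2.
Qed.

Lemma mxintegral_translate g m n (F : G -> 'M[R[i]]_(m, n)) : mxcontinuous F ->
  mxintegral mu (fun h => F (mul g h)) = mxintegral mu F.
Proof.
by move=> cF; apply/matrixP => i j; rewrite !mxE; exact: cintegral_translate.
Qed.
End HaarInvariance.

Section Adjoint.
Variable C : numClosedFieldType.

Lemma adjmxD m n (A B : 'M[C]_(m, n)) : (A + B)^t* = A^t* + B^t*.
Proof. by rewrite linearD map_mxD. Qed.

Lemma adjmxZ m n a (A : 'M[C]_(m, n)) : (a *: A)^t* = a^* *: A^t*.
Proof. by rewrite linearZ map_mxZ. Qed.

Lemma adjmxM m n p (A : 'M[C]_(m, n)) (B : 'M[C]_(n, p)) :
  (A *m B)^t* = B^t* *m A^t*.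
Proof. by rewrite trmx_mul map_mxM. Qed.

Lemma adjmx_tens m n p q (A : 'M[C]_(m, n)) (B : 'M[C]_(p, q)) :
  (A *t B)^t* = A^t* *t B^t*.
Proof. by apply/matrixP => i j; rewrite !mxE rmorphM. Qed.

Lemma adjmx_delta m n (i : 'I_m) (j : 'I_n) :
  (delta_mx i j : 'M[C]_(m, n))^t* = delta_mx j i.
Proof. by rewrite trmx_delta map_delta_mx. Qed.
End Adjoint.

Section Twirl.
Variables (R : realType) (G : ptopologicalType).
Variables (mul : G -> G -> G) (inv : G -> G) (one : G).
Variable mu : probability (borel_G G) R.
Hypotheses (CG : compact_group mul inv one) (haar_mu : haar mul mu).
Let compactG : compact [set: G] := cg_compact CG.

Definition rep_invariant n (U : G -> 'M[R[i]]_n) (M : 'M[R[i]]_n) :=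
  forall g, U g *m M *m (U g)^t* = M.

Lemma twirlE n (U : G -> 'M[R[i]]_n) M :
  twirl mu U M = mxintegral mu (fun g => U g *m M *m (U g)^t*).
Proof. by apply/matrixP => i j; rewrite !mxE. Qed.

Lemma twirl_id n (U : G -> 'M[R[i]]_n) M : rep_invariant U M -> twirl mu U M = M.
Proof.
by move=> UM; rewrite twirlE; under eq_fun do rewrite UM; exact: mxintegral_cst.
Qed.

Section Representation.
Variables (n : nat) (U : G -> 'M[R[i]]_n).
Hypothesis U_rep : cont_unitary_rep mul one U.

Lemma mxcontinuous_rep : mxcontinuous U.
Proof. by case: U_rep => _ _ _ cU i j; have [] := cU i j. Qed.

Lemma mxcontinuous_conj_rep M : mxcontinuous (fun g => U g *m M *m (U g)^t*).
Proof.
apply: mxcontinuous_mul; last exact/mxcontinuous_adj/mxcontinuous_rep.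
by apply: mxcontinuous_mul; [exact: mxcontinuous_rep | exact: mxcontinuous_cst].
Qed.

Lemma rep_invariant_twirl M : rep_invariant U (twirl mu U M).
Proof.
have [U_mul _ _ _] := U_rep.
move=> g; rewrite twirlE -(mxintegral_mulmxl _ compactG); last first.
  exact: mxcontinuous_conj_rep.
rewrite -(mxintegral_mulmxr _ compactG); last first.
  by apply: mxcontinuous_mul; [exact: mxcontinuous_cst|exact: mxcontinuous_conj_rep].
rewrite -(mxintegral_translate CG haar_mu g (mxcontinuous_conj_rep M)).
by congr mxintegral; apply: funext => h; rewrite U_mul adjmxM !mulmxA.
Qed.

Lemma twirl_psd M : psd M -> psd (twirl mu U M).
Proof.
move=> psdM v; rewrite twirlE -(mxintegral_mulmxl _ compactG); last first.
  exact: mxcontinuous_conj_rep.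
rewrite -(mxintegral_mulmxr _ compactG); last first.
  by apply: mxcontinuous_mul; [exact: mxcontinuous_cst|exact: mxcontinuous_conj_rep].
rewrite mxE; apply: cintegral_ge0 => g.
have -> : v^t* *m (U g *m M *m (U g)^t*) *m v
          = ((U g)^t* *m v)^t* *m M *m ((U g)^t* *m v).
  by rewrite adjmxM trmxCK !mulmxA.
exact: psdM.
Qed.

Lemma mxtrace_twirl M : \tr (twirl mu U M) = \tr M.
Proof.
have [_ _ U_unitary _] := U_rep.
rewrite twirlE /mxtrace; under eq_bigr do rewrite mxE.
rewrite -(cintegral_sum _ compactG) => [|i]; last exact: mxcontinuous_conj_rep.
under eq_fun do rewrite -/(mxtrace _) mxtrace_mulC mulmxA
  (mulmx1C (unitarymxP (U_unitary _))) mul1mx.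
exact: cintegral_cst.
Qed.
End Representation.

Lemma twirlRA_tensl nR nA (UR : G -> 'M[R[i]]_nR) (UA : G -> 'M[R[i]]_nA) M N :
  cont_unitary_rep mul one UA -> rep_invariant UR M ->
  twirlRA mu UR UA (M *t N) = M *t twirl mu UA N.
Proof.
move=> UA_rep URM; rewrite /twirlRA !twirlE.
rewrite -(mxintegral_tensl _ compactG); last first.
  exact: mxcontinuous_conj_rep.
by congr mxintegral; apply: funext => g; rewrite adjmx_tens !tensmx_mul URM.
Qed.

Lemma twirlRA_tensr nR nA (UR : G -> 'M[R[i]]_nR) (UA : G -> 'M[R[i]]_nA) M N :
  cont_unitary_rep mul one UR -> rep_invariant UA N ->
  twirlRA mu UR UA (M *t N) = twirl mu UR M *t N.
Proof.
move=> UR_rep UAN; rewrite /twirlRA !twirlE.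
rewrite -(mxintegral_tensr _ compactG); last first.
  exact: mxcontinuous_conj_rep.
by congr mxintegral; apply: funext => g; rewrite adjmx_tens !tensmx_mul UAN.
Qed.
End Twirl.

Section PositiveSemidefinite.
Variable R : realType.
Local Notation C := R[i].

Definition sesqmx n (A : 'M[C]_n) (u w : 'cV[C]_n) : C := (u^t* *m A *m w) 0 0.

Lemma sesqmxDl n (A : 'M[C]_n) u v w :
  sesqmx A (u + v) w = sesqmx A u w + sesqmx A v w.
Proof. by rewrite /sesqmx adjmxD !mulmxDl mxE. Qed.

Lemma sesqmxDr n (A : 'M[C]_n) u v w :
  sesqmx A u (v + w) = sesqmx A u v + sesqmx A u w.
Proof. by rewrite /sesqmx mulmxDr mxE. Qed.

Lemma sesqmxZl n (A : 'M[C]_n) a u w : sesqmx A (a *: u) w = a^* * sesqmx A u w.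
Proof. by rewrite /sesqmx adjmxZ -!scalemxAl mxE. Qed.

Lemma sesqmxZr n (A : 'M[C]_n) a u w : sesqmx A u (a *: w) = a * sesqmx A u w.
Proof. by rewrite /sesqmx -scalemxAr mxE. Qed.

Lemma sesqmx_mxB n (A B : 'M[C]_n) u w :
  sesqmx (A - B) u w = sesqmx A u w - sesqmx B u w.
Proof. by rewrite /sesqmx mulmxBr mulmxBl !mxE. Qed.

Lemma sesqmx_mxZ n a (A : 'M[C]_n) u w : sesqmx (a *: A) u w = a * sesqmx A u w.
Proof. by rewrite /sesqmx -scalemxAr -scalemxAl mxE. Qed.

Lemma sesqmx_delta n (A : 'M[C]_n) i j :
  sesqmx A (delta_mx i 0) (delta_mx j 0) = A i j.
Proof. by rewrite /sesqmx adjmx_delta -rowE -colE !mxE. Qed.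

Lemma psd_sesqmx_conj n (A : 'M[C]_n) v : psd A -> (sesqmx A v v)^* = sesqmx A v v.
Proof. by move=> psdA; exact/geC0_conj/psdA. Qed.

(* Polarization along [e_i + c e_j] for [c = 1] and [c = 'i]. *)
Lemma conj_offdiag_of_real_forms (a b x y : C) : a^* = a -> b^* = b ->
  (forall c, (a + c * x + c^* * y + c^* * c * b)^*
             = a + c * x + c^* * y + c^* * c * b) ->
  y^* = x.
Proof.
move=> ra rb real_form; have := real_form 'i; have := real_form 1.
rewrite !rmorphD !rmorphM /= !conjCK conjCi rmorph1 ra rb => e1 e2.
have : ('i *+ 2) * (y^* - x) =
    'i * ((a + 1 * x^* + 1 * y^* + 1 * 1 * b) - (a + 1 * x + 1 * y + 1 * 1 * b))
    + ((a + - 'i * x^* + 'i * y^* + 'i * - 'i * b)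
       - (a + 'i * x + - 'i * y + - 'i * 'i * b)) by ring.
rewrite e1 e2 !subrr mulr0 addr0 => /eqP.
by rewrite mulf_eq0 mulrn_eq0 (negPf (neq0Ci _)) subr_eq0 => /eqP.
Qed.

Lemma psd_adjmx n (A : 'M[C]_n) : psd A -> A^t* = A.
Proof.
move=> psdA; apply/matrixP => i j; rewrite !mxE.
have diag_real k : (A k k)^* = A k k.
  by rewrite -sesqmx_delta psd_sesqmx_conj.
apply: conj_offdiag_of_real_forms (diag_real i) (diag_real j) _ => c.
have := psd_sesqmx_conj (delta_mx i 0 + c *: delta_mx j 0) psdA.
rewrite !(sesqmxDl, sesqmxDr, sesqmxZl, sesqmxZr) !sesqmx_delta.
by rewrite mulrDr mulrA !addrA.
Qed.

Lemma psd_hermsymmx n (A : 'M[C]_n) : psd A -> A \is hermsymmx.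
Proof. by move=> psdA; apply/is_hermitianmxP; rewrite expr0 scale1r psd_adjmx. Qed.

Lemma adjmx_mulmx_sum n (w : 'cV[C]_n) : (w^t* *m w) 0 0 = \sum_k `|w k 0| ^+ 2.
Proof. by rewrite mxE; apply: eq_bigr => k _; rewrite !mxE normCK mulrC. Qed.

Lemma adjmx_mulmx_ge0 n (u : 'cV[C]_n) : 0 <= (u^t* *m u) 0 0.
Proof. by rewrite adjmx_mulmx_sum sumr_ge0 // => k _; exact: exprn_ge0. Qed.

Lemma psd_adjmx_mulmx m n (M : 'M[C]_(m, n)) : psd (M^t* *m M).
Proof.
move=> v; have -> : v^t* *m (M^t* *m M) *m v = (M *m v)^t* *m (M *m v).
  by rewrite adjmxM !mulmxA.
exact: adjmx_mulmx_ge0.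
Qed.

Lemma conj_diag_mx_sqrt n (P : 'M[C]_n) (d : 'rV[C]_n) : (forall k, 0 <= d 0 k) ->
  let S := diag_mx (map_mx sqrtC d) *m P in P^t* *m diag_mx d *m P = S^t* *m S.
Proof.
move=> d_ge0 /=; rewrite adjmxM -!mulmxA; congr (_ *m _); rewrite !mulmxA.
congr (_ *m _); rewrite tr_diag_mx map_diag_mx mulmx_diag; congr diag_mx.
apply/matrixP => i k; rewrite !mxE (ord1 i).
by rewrite /= geC0_conj ?sqrtC_ge0 // -expr2 sqrtCK.
Qed.

Lemma psd_conj_diag_mx n (P : 'M[C]_n) (d : 'rV[C]_n) : (forall k, 0 <= d 0 k) ->
  psd (P^t* *m diag_mx d *m P).
Proof. by move=> d_ge0; rewrite conj_diag_mx_sqrt //; exact: psd_adjmx_mulmx. Qed.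

Lemma psd_spectral n (A : 'M[C]_n) : psd A ->
  exists (P : 'M[C]_n) (d : 'rV[C]_n),
    [/\ P \is unitarymx, A = P^t* *m diag_mx d *m P & forall k, 0 <= d 0 k].
Proof.
move=> psdA; have /hermitian_normalmx/orthomx_spectralP := psd_hermsymmx psdA.
set P := spectralmx A; set d := spectral_diag A.
have P_unitary : P \is unitarymx by exact: spectral_unitarymx.
rewrite invmx_unitary // => defA; exists P, d; split => // k.
have := psdA (P^t* *m delta_mx k 0).
rewrite defA adjmxM trmxCK !mulmxA -(mulmxA _ P) (unitarymxP P_unitary) mulmx1.
rewrite -(mulmxA _ P) (unitarymxP P_unitary) mulmx1.
have := sesqmx_delta (diag_mx d) k k; rewrite /sesqmx => ->.
by rewrite mxE eqxx mulr1n.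
Qed.

Lemma psd_factor n (A : 'M[C]_n) : psd A -> exists M : 'M[C]_n, A = M^t* *m M.
Proof.
move=> /psd_spectral [P [d [_ -> d_ge0]]].
by exists (diag_mx (map_mx sqrtC d) *m P); rewrite conj_diag_mx_sqrt.
Qed.

Lemma psd_tensmx m n (A : 'M[C]_m) (B : 'M[C]_n) : psd A -> psd B -> psd (A *t B).
Proof.
move=> /psd_factor [M ->] /psd_factor [N ->].
by rewrite -tensmx_mul -adjmx_tens; exact: psd_adjmx_mulmx.
Qed.
End PositiveSemidefinite.

Section Extrema.
Variable R : realType.

Lemma sup_attained (E : set R) x : E x -> ubound E x -> sup E = x.
Proof.
move=> Ex ubx; apply/le_anti/andP; split.
  exact: ge_sup (ex_intro _ x Ex) ubx.
by apply: sup_upper_bound => //; split; exists x.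
Qed.

Lemma inf_attained (E : set R) x : E x -> lbound E x -> inf E = x.
Proof.
move=> Ex lbx; apply/le_anti/andP; split.
  exact: (ge_inf (ex_intro _ x lbx) Ex).
exact: lb_le_inf (ex_intro _ x Ex) lbx.
Qed.
End Extrema.

Section TopEigenvalue.
Variable R : realType.
Local Notation C := R[i].

Lemma vnormE n (v : 'cV[C]_n) :
  vnorm v = Num.sqrt (complex.Re ((v^t* *m v) 0 0)).
Proof.
by rewrite adjmx_mulmx_sum /vnorm (raddf_sum (@complex.Re R : Rcomplex R -> R)).
Qed.

Lemma unitary_adjmx_mulmx n (P : 'M[C]_n) (v : 'cV[C]_n) : P \is unitarymx ->
  (P *m v)^t* *m (P *m v) = v^t* *m v.
Proof.
move=> /unitarymxP P_unitary.
by rewrite adjmxM -mulmxA (mulmxA _ P) (mulmx1C P_unitary) mul1mx.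
Qed.

Variables (n : nat) (P : 'M[C]_n.+1) (d : 'rV[C]_n.+1).
Hypotheses (P_unitary : P \is unitarymx) (d_ge0 : forall k, 0 <= d 0 k).
Local Notation sigma := (P^t* *m diag_mx d *m P).

Definition top_index := [arg max_(k > ord0) complex.Re (d 0 k)]%O.
Definition top_eigenvalue := complex.Re (d 0 top_index).
Definition top_eigenvector : 'cV[C]_n.+1 := P^t* *m delta_mx top_index 0.
Local Notation l := top_eigenvalue.
Local Notation v := top_eigenvector.

Lemma top_eigenvalue_ge0 : 0 <= l.
Proof. exact: le_complex_Re (d_ge0 _). Qed.

Lemma le_top_eigenvalue k : d 0 k <= l%:C.
Proof.
rewrite (ge0_complex_real (d_ge0 k)) lecR /l /top_index.
by case: arg_maxP => // i _; apply.
Qed.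

Lemma top_eigenvector_unit : v^t* *m v = 1%:M.
Proof.
rewrite unitary_adjmx_mulmx ?trmxC_unitary // adjmx_delta mul_delta_mx.
by apply/matrixP => i j; rewrite !ord1 !mxE.
Qed.

Lemma top_eigenvectorP : sigma *m v = l%:C *: v.
Proof.
rewrite !mulmxA -(mulmxA _ P) (unitarymxP P_unitary) mulmx1 scalemxAr -mulmxA.
congr (_ *m _); apply/matrixP => i j; rewrite mul_diag_mx !mxE (ord1 j).
by case: eqP => [->|_]; rewrite ?mulr1 ?mulr0 -?ge0_complex_real.
Qed.

Lemma vnorm_le_top_eigenvalue u : vnorm u = 1 -> vnorm (sigma *m u) <= l.
Proof.
move=> u1; set w := P *m u; set z := diag_mx d *m w.
have uu1 : complex.Re ((u^t* *m u) 0 0) = 1.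
  by rewrite -(sqr_sqrtr (le_complex_Re (adjmx_mulmx_ge0 u))) -vnormE u1 expr1n.
have zz : (sigma *m u)^t* *m (sigma *m u) = z^t* *m z.
  have -> : sigma *m u = P^t* *m z by rewrite /z /w !mulmxA.
  by apply: unitary_adjmx_mulmx; rewrite trmxC_unitary.
have zz_le : (z^t* *m z) 0 0 <= l%:C ^+ 2 * (u^t* *m u) 0 0.
  rewrite -(unitary_adjmx_mulmx u P_unitary) -/w !adjmx_mulmx_sum mulr_sumr.
  apply: ler_sum => k _; rewrite /z mul_diag_mx mxE normrM exprMn.
  rewrite ler_wpM2r ?exprn_ge0 // (ger0_norm (d_ge0 k)) ler_pXn2r ?nnegrE //.
    exact: le_top_eigenvalue.
  by rewrite ler0c top_eigenvalue_ge0.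
rewrite vnormE zz -[l]ger0_norm ?top_eigenvalue_ge0 // -sqrtr_sqr.
rewrite ler_sqrt ?exprn_ge0 ?top_eigenvalue_ge0 //.
by have := le_complex_Re zz_le; rewrite -rmorphXn Re_realM uu1 mulr1.
Qed.

Lemma opnorm_top_eigenvalue : opnorm sigma = l.
Proof.
apply: sup_attained => [|_ [u u1 <-]]; last exact: vnorm_le_top_eigenvalue.
exists v; first by rewrite /= vnormE top_eigenvector_unit mxE /= sqrtr1.
rewrite top_eigenvectorP vnormE adjmxZ -scalemxAl -scalemxAr top_eigenvector_unit.
rewrite !mxE mulr1 /= (_ : _ - _ = l ^+ 2); last by ring.
by rewrite sqrtr_sqr ger0_norm // top_eigenvalue_ge0.
Qed.

Lemma psd_top_eigenvalue_sub : psd (l%:C *: 1%:M - sigma).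
Proof.
have -> : l%:C *: 1%:M - sigma = P^t* *m diag_mx (\row_k (l%:C - d 0 k)) *m P.
  have -> : diag_mx (\row_k (l%:C - d 0 k)) = l%:C%:M - diag_mx d.
    by apply/matrixP => i j; rewrite !mxE mulrnBl.
  rewrite mulmxBr mulmxBl mul_mx_scalar -scalemxAl.
  by rewrite (mulmx1C (unitarymxP P_unitary)).
by apply: psd_conj_diag_mx => k; rewrite mxE subr_ge0; exact: le_top_eigenvalue.
Qed.
End TopEigenvalue.

Section ConditionalMinEntropy.
Variable R : realType.
Local Notation C := R[i].

Lemma tensmx11 (a b : 'M[C]_1) : (a *t b) 0 0 = a 0 0 * b 0 0.
Proof. by rewrite mxE; case: (mxtens_unindex _) => i j /=; rewrite !ord1. Qed.

Lemma sesqmx_tens n m (A : 'M[C]_n) (B : 'M[C]_m)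
    (v v' : 'cV[C]_n) (w w' : 'cV[C]_m) :
  sesqmx (A *t B) (v *t w) (v' *t w') = sesqmx A v v' * sesqmx B w w'.
Proof.
rewrite /sesqmx (adjmx_tens v w) (tensmx_mul (v^t*) (w^t*) A B).
by rewrite (tensmx_mul (v^t* *m A) (w^t* *m B) v' w') tensmx11.
Qed.

Lemma psd_mxtrace_ge0 n (A : 'M[C]_n) : psd A -> 0 <= \tr A.
Proof.
by move=> psdA; apply: sumr_ge0 => k _; rewrite -sesqmx_delta; exact: psdA.
Qed.

Section TensorWithState.
Variables (n m : nat) (P : 'M[C]_n.+1) (d : 'rV[C]_n.+1) (tau : 'M[C]_m).
Hypotheses (P_unitary : P \is unitarymx) (d_ge0 : forall k, 0 <= d 0 k).
Hypotheses (psd_tau : psd tau) (tr_tau : \tr tau = 1).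
Local Notation sigma := (P^t* *m diag_mx d *m P).
Local Notation l := (top_eigenvalue d).

Lemma psd_top_eigenvalue_tens : psd (1%:M *t (l%:C *: tau) - sigma *t tau).
Proof.
have -> : 1%:M *t (l%:C *: tau) - sigma *t tau = (l%:C *: 1%:M - sigma) *t tau.
  move: (l%:C) sigma => a S.
  by apply/matrixP => i j; rewrite !mxE; ring.
exact/psd_tensmx/psd_tau/psd_top_eigenvalue_sub.
Qed.

(* Compress [1 (x) X - sigma (x) tau] along [v (x) w], [v] a top eigenvector. *)
Lemma top_eigenvalue_le_mxtrace X : psd (1%:M *t X - sigma *t tau) ->
  l <= complex.Re (\tr X).
Proof.
move=> psdX; pose v := top_eigenvector P d.
have v1 : sesqmx 1%:M v v = 1.
  by rewrite /sesqmx mulmx1 top_eigenvector_unit // mxE.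
have vl : sesqmx sigma v v = l%:C.
  rewrite /sesqmx -mulmxA top_eigenvectorP // -scalemxAr top_eigenvector_unit //.
  by rewrite !mxE mulr1.
have psdY : psd (X - l%:C *: tau).
  move=> w; change (0 <= sesqmx (X - l%:C *: tau) w w).
  have : 0 <= sesqmx (1%:M *t X - sigma *t tau) (v *t w) (v *t w) := psdX _.
  by rewrite sesqmx_mxB !sesqmx_tens v1 vl mul1r sesqmx_mxB sesqmx_mxZ.
have := psd_mxtrace_ge0 psdY.
by rewrite linearB /= mxtraceZ tr_tau mulr1 subr_ge0 => /le_complex_Re.
Qed.
End TensorWithState.

Lemma Hmin_tensmx n m (sigma : 'M[C]_n.+1) (tau : 'M[C]_m) :
  psd sigma -> is_state tau -> Hmin (sigma *t tau) = - log2 (opnorm sigma).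
Proof.
move=> /psd_spectral [P [d [P_unitary -> d_ge0]]] [psd_tau tr_tau].
rewrite opnorm_top_eigenvalue //; congr (- log2 _).
apply: inf_attained => [|_ [X [_ psdX] <-]]; last first.
  exact (top_eigenvalue_le_mxtrace P_unitary d_ge0 tr_tau psdX).
exists ((top_eigenvalue d)%:C *: tau); first split.
- move=> w; rewrite -scalemxAr -scalemxAl mxE.
  by rewrite mulr_ge0 ?lecR ?top_eigenvalue_ge0 ?psd_tau.
- exact: psd_top_eigenvalue_tens.
by rewrite mxtraceZ tr_tau mulr1.
Qed.
End ConditionalMinEntropy.

Theorem lemma4 (R : realType) (G : ptopologicalType)
    (mul : G -> G -> G) (inv : G -> G) (one : G)
    (mu : probability (borel_G G) R)
    (nA nR : nat) (UA : G -> 'M[R[i]]_nA) (UR : G -> 'M[R[i]]_nR)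
    (rho : 'M[R[i]]_nA) (eta : 'M[R[i]]_nR) :
  compact_group mul inv one ->
  haar mul mu ->
  cont_unitary_rep mul one UA ->
  cont_unitary_rep mul one UR ->
  is_state rho -> is_state eta ->
  Heta mu UR UA (twirl mu UR eta) rho = Heta mu UR UA eta (twirl mu UA rho) /\
  Heta mu UR UA eta (twirl mu UA rho)
    = Heta mu UR UA (twirl mu UR eta) (twirl mu UA rho) /\
  Heta mu UR UA (twirl mu UR eta) (twirl mu UA rho)
    = - log2 (opnorm (twirl mu UR eta)).
Proof.
move=> CG haar_mu UA_rep UR_rep [psd_rho tr_rho] [psd_eta tr_eta].
case: nR UR eta UR_rep psd_eta tr_eta => [|n] UR eta UR_rep psd_eta tr_eta.
  by move: tr_eta; rewrite /mxtrace big_ord0 => /eqP; rewrite eq_sym oner_eq0.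
have inv_eta := rep_invariant_twirl CG haar_mu UR_rep eta.
have inv_rho := rep_invariant_twirl CG haar_mu UA_rep rho.
rewrite /Heta !(twirlRA_tensl mu CG _ UA_rep inv_eta)
  (twirlRA_tensr mu CG _ UR_rep inv_rho).
rewrite (twirl_id mu inv_rho); split => //; split => //.
apply: Hmin_tensmx; first exact (twirl_psd mu CG UR_rep psd_eta).
split; first exact (twirl_psd mu CG UA_rep psd_rho).
by rewrite (mxtrace_twirl mu CG UA_rep).
Qed.
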